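(* Let $p>2$ be a prime, $q=p^h$, and let $\mathcal{F}$ be the projective closure of $ax^ny^m+bx^n+cy^m=1$ over $\mathbb{F}_q$, where $a,b,c\in\mathbb{F}_q^*$ and $c\neq-\frac ab$. Then for all positive integers $m,n$ with $p\nmid mn$, $\mathcal{F}$ is $\mathbb{F}_q$-Frobenius classical with respect to lines.
   Context: With $\varphi=(1,x,y)$, $\tau$ a separating element and $D^{(k)}_\tau$ Hasse derivatives, the $\mathbb{F}_q$-Frobenius order sequence w.r.t. lines is the lexicographically smallest $\nu_0<\nu_1$ such that the $3\times3$ determinant with rows $(1,x^q,y^q)$, $(D^{(\nu_0)}_\tau\varphi_j)_j$, $(D^{(\nu_1)}_\tau\varphi_j)_j$ is nonzero; the curve is $\mathbb{F}_q$-Frobenius classical w.r.t. lines if $(\nu_0,\nu_1)=(0,1)$. *)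

From HB Require Import structures.
From mathcomp Require Import all_boot all_order all_algebra all_field.
Set Implicit Arguments. Unset Strict Implicit. Unset Printing Implicit Defensive.
Import Order.TTheory GRing.Theory.
Local Open Scope ring_scope.

Section Defs.
Variables (F : finFieldType) (K : fieldType) (iota : {rmorphism F -> K}).

(* Evaluation of a bivariate polynomial P(X,Y) over F at (x,y) in K:
   outer variable = Y, inner variable = X. *)
Definition eval2 (P : {poly {poly F}}) (x y : K) : K :=
  (map_poly (fun c : {poly F} => (map_poly iota c).[x]) P).[y].

Definition on_curve (a b c : F) (m n : nat) (x y : K) : Prop :=
  iota a * x ^+ n * y ^+ m + iota b * x ^+ n + iota c * y ^+ m = 1.

(* (K, x, y) is the function field F_q(F) of the curve with its coordinate
   functions: x, y satisfy the equation, x is transcendental over F_q, and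
   K = F_q(x, y). *)
Definition is_function_field (a b c : F) (m n : nat) (x y : K) : Prop :=
  [/\ on_curve a b c m n x y,
      (forall P : {poly F}, (map_poly iota P).[x] = 0 -> P = 0) &
      (forall z : K, exists P Q : {poly {poly F}},
          eval2 Q x y != 0 /\ z = eval2 P x y / eval2 Q x y)].

(* D = (D^{(k)})_k is the family of Hasse derivatives of K with respect to
   tau: an iterative higher derivation, trivial on constants, with
   D^{(1)} tau = 1 and D^{(k)} tau = 0 for k >= 2. *)
Definition is_hasse (tau : K) (D : nat -> K -> K) : Prop :=
  (forall u, D 0%N u = u) /\
  (forall k u v, D k (u + v) = D k u + D k v) /\
  (forall k u v, D k (u * v) = \sum_(i < k.+1) D i u * D (k - i)%N v) /\
  (forall k (c : F), (0 < k)%N -> D k (iota c) = 0) /\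
  (forall i j u, D i (D j u) = 'C(i + j, i)%:R * D (i + j)%N u) /\
  D 1%N tau = 1 /\ (forall k, (1 < k)%N -> D k tau = 0).

Definition phi (x y : K) (j : 'I_3) : K := nth 0 [:: 1; x; y] j.

Definition frob_det (q : nat) (x y : K) (D : nat -> K -> K) (nu0 nu1 : nat) : K :=
  \det (\matrix_(i < 3, j < 3)
          if i == 0 :> nat then phi x y j ^+ q
          else if i == 1 :> nat then D nu0 (phi x y j)
          else D nu1 (phi x y j)).

Definition lex_lt (m0 m1 n0 n1 : nat) : bool :=
  (m0 < n0)%N || ((m0 == n0) && (m1 < n1)%N).

Definition frob_order_seq (q : nat) (x y : K) (D : nat -> K -> K) (nu0 nu1 : nat) : Prop :=
  [/\ (nu0 < nu1)%N, frob_det q x y D nu0 nu1 != 0 &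
      forall m0 m1, (m0 < m1)%N -> lex_lt m0 m1 nu0 nu1 ->
        frob_det q x y D m0 m1 = 0].

Definition frobenius_classical_lines (q : nat) (x y : K) (D : nat -> K -> K) : Prop :=
  frob_order_seq q x y D 0 1.

End Defs.

(* Let d = D^(1): a derivation of K vanishing on F_q, with d (u ^+ q) = 0 since q = 0
   in K.  The Frobenius determinant for (0, 1) is the Wronskian of x - x^q and y - y^q
   with respect to d; differentiating it, its vanishing would force the Wronskian
   dx d(dy) - dy d(dx) to vanish, because x - x^q <> 0.  On the curve y^m B = C, with
   B = a x^n + c and C = 1 - b x^n, logarithmic differentiation gives
   m x B C dy = -n (a + bc) x^n y dx, and then (m x B C)^2 (dx d(dy) - dy d(dx)) equals
   y dx^3 (-n (a + bc) x^n) T(x^n) for a trinomial T with constant coefficient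
   (n - 1) m c and leading coefficient (n + 1) m a b.  As p > 2 these do not both
   vanish, so T(x^n) <> 0 by transcendence of x, while dx <> 0 because d is nonzero
   on K = F_q(x, y). *)

From HB Require Import structures.
From mathcomp Require Import all_boot all_order all_algebra all_field.
From mathcomp Require Import ring zify.
Import GRing.Theory.
Local Open Scope ring_scope.
Set Implicit Arguments. Unset Strict Implicit.

Section Derivation.
Variables (R : comNzRingType) (d : {additive R -> R}).
Hypothesis derM : forall u v, d (u * v) = u * d v + d u * v.

Definition wronskian (u v : R) := u * d v - v * d u.

Lemma der1 : d 1 = 0.
Proof.
by have := derM 1 1; rewrite !mul1r mulr1 => h; apply: (addrI (d 1)); rewrite addr0 -h.
Qed.

Lemma derX u k : d (u ^+ k) = k%:R * u ^+ k.-1 * d u.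
Proof.
case: k => [|k]; first by rewrite der1 !mul0r.
elim: k => [|k IHk]; first by rewrite mul1r expr0 mul1r.
by rewrite exprS derM IHk /= [u ^+ k.+1]exprS -natr1; ring.
Qed.

Lemma mul_derX u k : u * d (u ^+ k) = k%:R * u ^+ k * d u.
Proof. by rewrite derX; case: k => [|k]; rewrite ?mul0r ?mulr0 // exprS /=; ring. Qed.

Lemma der_horner (p : {poly R}) z :
  (forall i, d p`_i = 0) -> d z = 0 -> d p.[z] = 0.
Proof.
move=> dp dz; rewrite horner_coef raddf_sum big1 // => i _.
by rewrite derM dp derX dz !mulr0 mul0r addr0.
Qed.

Lemma wronskian_eq0_der u v :
  GRing.lreg u -> wronskian u v = 0 -> wronskian (d u) (d v) = 0.
Proof.
move=> u_reg W0; apply: u_reg; rewrite mulr0.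
have -> : u * wronskian (d u) (d v) = d u * d (wronskian u v) - d (d u) * wronskian u v.
  by rewrite /wronskian raddfB !derM; ring.
by rewrite W0 raddf0 !mulr0 subr0.
Qed.

Lemma wronskian_logder x y p q p' q' :
    d p = p' * d x -> d q = q' * d x -> q * d y = y * p * d x ->
  q ^+ 2 * wronskian (d x) (d y) = y * d x ^+ 3 * (p ^+ 2 + p' * q - p * q').
Proof.
move=> dp dq logder_y; have := congr1 d logder_y; rewrite !derM dp dq => dlogder_y.
apply/eqP; rewrite -subr_eq0.
have -> : q ^+ 2 * wronskian (d x) (d y) - y * d x ^+ 3 * (p ^+ 2 + p' * q - p * q') =
    q * d x * (q * d (d y) + q' * d x * d y
               - (y * p * d (d x) + (y * (p' * d x) + d y * p) * d x))
    + ((p - q') * d x ^+ 2 - q * d (d x)) * (q * d y - y * p * d x).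
  by rewrite /wronskian; ring.
by rewrite dlogder_y logder_y !subrr !mulr0 addr0.
Qed.

End Derivation.

Lemma frob_det01_wronskian (K : fieldType) q (x y : K) (D : nat -> K -> K)
    (d : {additive K -> K}) :
    D 0 =1 id -> D 1 =1 d -> d 1 = 0 -> d (x ^+ q) = 0 -> d (y ^+ q) = 0 ->
  frob_det q x y D 0 1 = wronskian d (x - x ^+ q) (y - y ^+ q).
Proof.
move=> D0 D1 d1 dxq dyq; rewrite /frob_det (expand_det_row _ 0) !big_ord_recl big_ord0.
rewrite /cofactor !(expand_det_row _ 0) !big_ord_recl !big_ord0 /cofactor !det_mx11 !mxE.
rewrite /= /phi /= /bump /= !D0 !D1 d1 !(addn0, add0n, addn1) expr1n.
by rewrite /wronskian !raddfB dxq dyq; ring.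
Qed.

Lemma hasse_der1 (F : finFieldType) (K : fieldType) (iota : {rmorphism F -> K}) tau
    (D : nat -> K -> K) :
  is_hasse iota tau D ->
  exists2 d : {additive K -> K}, D 1 =1 d &
    (forall u v, d (u * v) = u * d v + d u * v) /\ (forall k, d (iota k) = 0).
Proof.
move=> [D0 [DD [DM [Dc _]]]].
have D10 : D 1 0 = 0 by apply: (addrI (D 1 0)); rewrite -DD !addr0.
pose d : {additive K -> K} :=
  HB.pack (D 1) (GRing.isNmodMorphism.Build K K (D 1) (D10, DD 1)).
exists d => //.
split=> [u v|k]; last exact: Dc.
by rewrite /= DM !big_ord_recl big_ord0 /= !D0 addr0.
Qed.

Lemma frob_det01_classical (K : fieldType) q (x y : K) (D : nat -> K -> K) :
  frob_det q x y D 0 1 != 0 -> frobenius_classical_lines q x y D.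
Proof.
split=> // m0 m1 lt_m01 /orP[//|/andP[_]].
by rewrite ltnS leqn0 => /eqP m1_0; rewrite m1_0 in lt_m01.
Qed.

Section FunctionField.
Variables (F : finFieldType) (K : fieldType) (iota : {rmorphism F -> K}).
Variables (d : {additive K -> K}) (x y : K).
Hypothesis derM : forall u v, d (u * v) = u * d v + d u * v.
Hypothesis der_iota : forall c, d (iota c) = 0.
Hypotheses (dx0 : d x = 0) (dy0 : d y = 0).

Lemma der_eval2 P : d (eval2 iota P x y) = 0.
Proof.
rewrite /eval2; apply: (der_horner derM) => // i.
rewrite coef_map_id0 ?map_poly0 ?horner0 //.
by apply: (der_horner derM) => // j; rewrite coef_map der_iota.
Qed.

Lemma der_generated_eq0 :
    (forall z, exists P Q,
       eval2 iota Q x y != 0 /\ z = eval2 iota P x y / eval2 iota Q x y) ->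
  forall z, d z = 0.
Proof.
move=> gen z; have [P [Q [Q_neq0 ->]]] := gen z; apply: (mulIf Q_neq0).
have := derM (eval2 iota P x y / eval2 iota Q x y) (eval2 iota Q x y).
by rewrite mulfVK // !der_eval2 mulr0 add0r mul0r => <-.
Qed.

End FunctionField.

Lemma transcendental_neq_frobenius (F : finFieldType) (K : fieldType)
    (iota : {rmorphism F -> K}) (x : K) :
  (forall P : {poly F}, (map_poly iota P).[x] = 0 -> P = 0) -> x != x ^+ #|F|.
Proof.
move=> x_transc; rewrite -subr_eq0.
have : 'X - 'X^#|F| != 0 :> {poly F}.
  apply/eqP => /(congr1 (coefp 1)) /eqP.
  rewrite /= coefB coefX coefXn (ltn_eqF (card_finNzRing_gt1 F)).
  by rewrite subr0 coef0 oner_eq0.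
move/(contra_neq (@x_transc _)).
by rewrite rmorphB /= map_polyX map_polyXn !hornerE.
Qed.

Definition wronskian_poly (R : nzRingType) (a b c : R) (m n : nat) : {poly R} :=
  ((n.-1 * m)%:R * c)%:P - (n%:R * (a + b * c) + m%:R * (a - b * c))%:P * 'X^n
  + ((m * n.+1)%:R * a * b)%:P * 'X^(n * 2).

Lemma wronskian_poly_neq0 (R : idomainType) (a b c : R) m n :
    (0 < n)%N -> 2%:R != 0 :> R -> m%:R != 0 :> R -> a != 0 -> b != 0 -> c != 0 ->
  wronskian_poly a b c m n != 0.
Proof.
case: n => // n _ two_neq0 m_neq0 a_neq0 b_neq0 c_neq0; apply/eqP => wp0.
have := congr1 (coefp 0) wp0; have := congr1 (coefp (n.+1 * 2)) wp0.
rewrite /= !(coefD, coefN, coefCM, coefXn, coefC) /= eqxx.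
rewrite (_ : (n.+1 * 2 == n.+1)%N = false); last by apply/eqP; lia.
rewrite !mulr0 !mulr1 sub0r subr0 !addr0 oppr0 add0r.
move/eqP; rewrite !mulf_eq0 (negbTE a_neq0) (negbTE b_neq0) natrM mulf_eq0.
rewrite (negbTE m_neq0) !orbF => /eqP n2_0 /eqP.
rewrite mulf_eq0 (negbTE c_neq0) natrM mulf_eq0 (negbTE m_neq0) !orbF => /eqP n_0.
have n2E : n.+2%:R = 2%:R :> R by rewrite -addn2 natrD n_0 add0r.
by move: two_neq0; rewrite -n2E n2_0 eqxx.
Qed.

Section Curve.
Variables (F : finFieldType) (K : fieldType) (iota : {rmorphism F -> K}).
Variables (a b c : F) (m n : nat) (x y : K) (d : {additive K -> K}).
Hypothesis derM : forall u v, d (u * v) = u * d v + d u * v.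
Hypothesis der_iota : forall k, d (iota k) = 0.
Hypotheses (a_neq0 : a != 0) (b_neq0 : b != 0) (c_neq0 : c != 0).
Hypothesis abc_neq0 : a + b * c != 0.
Hypotheses (m_neq0 : m%:R != 0 :> F) (n_neq0 : n%:R != 0 :> F) (two_neq0 : 2%:R != 0 :> F).
Hypothesis curve : on_curve iota a b c m n x y.
Hypothesis x_transc : forall P : {poly F}, (map_poly iota P).[x] = 0 -> P = 0.

Local Notation X := (x ^+ n).
Local Notation Y := (y ^+ m).
Local Notation B := (iota a * X + iota c).
Local Notation C := (1 - iota b * X).

Let m_gt0 : (0 < m)%N. Proof. by rewrite lt0n; apply: contraNneq m_neq0 => ->. Qed.
Let n_gt0 : (0 < n)%N. Proof. by rewrite lt0n; apply: contraNneq n_neq0 => ->. Qed.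

Let horner_neq0 (P : {poly F}) : P != 0 -> (map_poly iota P).[x] != 0.
Proof. exact/contra_neq/x_transc. Qed.

Lemma curve_YB : Y * B = C.
Proof. by rewrite -curve; ring. Qed.

Lemma curve_logder :
  m%:R * x * B * C * d y = y * (- n%:R * iota (a + b * c) * X) * d x.
Proof.
have dB : d B = iota a * d X by rewrite raddfD derM !der_iota mul0r !addr0.
have dC : d C = - (iota b * d X).
  by rewrite raddfB derM der_iota (der1 derM) mul0r sub0r addr0.
have dYB : Y * d B + d Y * B - d C = 0 by rewrite -derM curve_YB subrr.
have dX : x * d X - n%:R * X * d x = 0 by rewrite (mul_derX derM) subrr.
have dY : y * d Y - m%:R * Y * d y = 0 by rewrite (mul_derX derM) subrr.
have YB : Y * B - C = 0 by rewrite curve_YB subrr.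
apply/eqP; rewrite -subr_eq0; apply/eqP.
transitivity (x * y * B * (Y * d B + d Y * B - d C)
  - (iota a * y * n%:R * X * d x + m%:R * x * B * d y) * (Y * B - C)
  - y * B * (iota a * Y + iota b) * (x * d X - n%:R * X * d x)
  - x * B ^+ 2 * (y * d Y - m%:R * Y * d y)).
  by rewrite dB dC rmorphD rmorphM; ring.
by rewrite dYB YB dX dY !mulr0 !subr0.
Qed.

Lemma curve_wronskian :
  (m%:R * x * B * C) ^+ 2 * wronskian d (d x) (d y) =
  y * d x ^+ 3 * (- n%:R * iota (a + b * c) * X)
    * (map_poly iota (wronskian_poly a b c m n)).[x].
Proof.
have dX : d X = n%:R * x ^+ n.-1 * d x by rewrite (derX derM).
have dp : d (- n%:R * iota (a + b * c) * X) =
    - n%:R * iota (a + b * c) * (n%:R * x ^+ n.-1) * d x.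
  by rewrite derM dX derM der_iota (raddfN d) (raddfMn d) (der1 derM) mul0rn; ring.
have dq : d (m%:R * x * B * C) =
    m%:R * (B * C + x * n%:R * x ^+ n.-1 * (iota a * C - iota b * B)) * d x.
  by rewrite !(derM, raddfD d, raddfN d, der_iota, dX, raddfMn d, der1 derM, mul0rn); ring.
rewrite (wronskian_logder derM dp dq curve_logder).
rewrite !(rmorphB (map_poly iota), rmorphD (map_poly iota), rmorphM (map_poly iota)) /=.
rewrite !map_polyC !map_polyXn !hornerE exprM.
have [n' ->] : exists n', n = n'.+1 by exists n.-1; rewrite prednK.
by rewrite /= [x ^+ n'.+1]exprS; ring.
Qed.

Lemma curve_C_neq0 : C != 0.
Proof.
have /horner_neq0 : 1 - b%:P * 'X^n != 0.
  apply/eqP => /(congr1 (coefp 0)) /eqP.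
  rewrite /= coefB coef1 coefCM coefXn [(0 == n)%N]eq_sym (gtn_eqF n_gt0).
  by rewrite mulr0 subr0 coef0 oner_eq0.
by rewrite rmorphB rmorph1 rmorphM /= map_polyC map_polyXn !hornerE.
Qed.

Lemma curve_y_neq0 : y != 0.
Proof.
apply: contraNneq curve_C_neq0 => y0.
by rewrite -curve_YB y0 expr0n (gtn_eqF m_gt0) mul0r.
Qed.

Lemma curve_x_neq0 : x != 0.
Proof. by have := horner_neq0 (negbT (polyX_eq0 F)); rewrite map_polyX hornerX. Qed.

Lemma curve_der_x_neq0 tau :
    (forall z, exists P Q,
       eval2 iota Q x y != 0 /\ z = eval2 iota P x y / eval2 iota Q x y) ->
  d tau = 1 -> d x != 0.
Proof.
move=> gen dtau; apply/eqP => dx0.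
have B_neq0 : B != 0.
  by apply: contraNneq curve_C_neq0 => B0; rewrite -curve_YB B0 mulr0.
have dy0 : d y = 0.
  apply/eqP; have := curve_logder; rewrite dx0 mulr0 => /eqP.
  rewrite !mulf_eq0 -(rmorph_nat iota) fmorph_eq0 (negbTE m_neq0) (negbTE curve_x_neq0).
  by rewrite (negbTE B_neq0) (negbTE curve_C_neq0).
move: dtau; rewrite (der_generated_eq0 derM der_iota dx0 dy0 gen) => /eqP.
by rewrite eq_sym oner_eq0.
Qed.

Lemma curve_wronskian_neq0 : d x != 0 -> wronskian d (d x) (d y) != 0.
Proof.
move=> dx_neq0; apply/eqP => W0; move: curve_wronskian; rewrite W0 mulr0 => /esym/eqP.
rewrite !mulf_eq0 oppr_eq0 expf_eq0 -(rmorph_nat iota) !fmorph_eq0.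
rewrite (negbTE curve_y_neq0) (negbTE dx_neq0) (negbTE n_neq0) (negbTE abc_neq0).
rewrite (negbTE curve_x_neq0) andbF (negbTE (horner_neq0 _)) //.
exact: wronskian_poly_neq0.
Qed.

End Curve.

Theorem proposition4p2 (p h : nat) (F : finFieldType) (K : fieldType)
    (iota : {rmorphism F -> K}) (a b c : F) (m n : nat) (x y tau : K)
    (D : nat -> K -> K) :
  prime p -> (2 < p)%N -> (0 < h)%N -> #|F| = (p ^ h)%N ->
  a != 0 -> b != 0 -> c != 0 -> c != - (a / b) ->
  (0 < m)%N -> (0 < n)%N -> ~~ (p %| m * n)%N ->
  is_function_field iota a b c m n x y ->
  is_hasse iota tau D ->
  frobenius_classical_lines #|F| x y D.
Proof.
move=> p_pr p_gt2 h_gt0 cardF a_neq0 b_neq0 c_neq0 c_neq _ _ p_ndvd_mn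
  [curve x_transc gen] hasse.
have [d D1 [derM der_iota]] := hasse_der1 hasse.
have [D0 [_ [_ [_ [_ [Dtau _]]]]]] := hasse.
have pF : p \in [pchar F] := card_finPcharP cardF p_pr.
have natF_neq0 k : ~~ (p %| k)%N -> k%:R != 0 :> F by rewrite (dvdn_pcharf pF).
have der_frob u : d (u ^+ #|F|) = 0.
  have q0 : #|F|%:R = 0 :> F by apply/eqP; rewrite -(dvdn_pcharf pF) cardF dvdn_exp.
  by rewrite (derX derM) -(rmorph_nat iota) q0 rmorph0 !mul0r.
have abc_neq0 : a + b * c != 0.
  apply: contra_neq c_neq => /eqP; rewrite addrC addr_eq0 => /eqP bc.
  by rewrite -(mulKf b_neq0 c) bc mulrN mulrC.
have m_neq0 : m%:R != 0 :> F.
  by apply/natF_neq0; move: p_ndvd_mn; apply: contra; apply: dvdn_mulr.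
have n_neq0 : n%:R != 0 :> F.
  by apply/natF_neq0; move: p_ndvd_mn; apply: contra; apply: dvdn_mull.
have two_neq0 : 2%:R != 0 :> F by apply/natF_neq0; rewrite gtnNdvd.
have dtau : d tau = 1 by rewrite -D1.
have dx_neq0 := curve_der_x_neq0 derM der_iota m_neq0 n_neq0 curve x_transc gen dtau.
apply: frob_det01_classical.
rewrite (frob_det01_wronskian D0 D1) ?der_frob ?(der1 derM) //.
apply: contra_neq (curve_wronskian_neq0 derM der_iota a_neq0 b_neq0 c_neq0 abc_neq0
  m_neq0 n_neq0 two_neq0 curve x_transc dx_neq0) => W0.
have x_reg : GRing.lreg (x - x ^+ #|F|).
  by apply/lregP; rewrite subr_eq0 (transcendental_neq_frobenius x_transc).
by move: (wronskian_eq0_der derM x_reg W0); rewrite !raddfB !der_frob !subr0.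
Qed.
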